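(* Let $\mathcal{M}$ be an $\mathbb{A}$-submodule of $\mathbb{A}^K$, $a_1,\dots,a_K\in\mathbb{Z}^n$ and $I,J\subseteq\{1,\dots,K\}$. Suppose that for every $v\in\mathbb{R}^n\setminus\{0\}$ there exists $\boldsymbol f_v\in\mathcal{M}$ with $\mathrm{in}_v(\boldsymbol f_v)\in(\mathbb{A}^+)^K$ and such that, writing $I'=M_v(I,\boldsymbol f_v)$ and $J'=O_v\cup J$, $(O_w\cup J')\cap M_w(I',\mathrm{in}_v(\boldsymbol f_v))\ne\emptyset$ for all $w\in\mathbb{R}^n\setminus\{0\}$. Then there exists $\boldsymbol f\in\mathcal{M}$ such that (i) $\mathrm{in}_v(\boldsymbol f)\in(\mathbb{A}^+)^K$ for all $v\in\mathbb{R}^n\setminus\{0\}$, and (ii) $(O_v\cup J)\cap M_v(I,\boldsymbol f)\ne\emptyset$ for all $v\in\mathbb{R}^n\setminus\{0\}$.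
   Context: $\mathbb{A}=\mathbb{R}[X_1^{\pm1},\dots,X_n^{\pm1}]$, $\mathbb{A}^+=\mathbb{R}_{\ge0}[X_1^{\pm1},\dots,X_n^{\pm1}]\setminus\{0\}$. For $f=\sum c_bX^b\ne0$: $\deg_v(f)=\max\{v\cdot b:c_b\neq0\}$, $\deg_v(0)=-\infty$, $\mathrm{in}_v(f)=\sum_{v\cdot b=\deg_v f}c_bX^b$, componentwise on vectors. $M_v(I,\boldsymbol f)=\{i\in I:\deg_v(f_i)=\max_{i'\in I}\deg_v(f_{i'})\}$; $O_v=\{i:a_i\not\perp v\}$. *)

From HB Require Import structures.
From mathcomp Require Import all_boot all_order all_algebra.
From mathcomp Require Import all_classical all_reals ereal.
Set Implicit Arguments. Unset Strict Implicit. Unset Printing Implicit Defensive.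
Import Order.TTheory GRing.Theory Num.Theory.
Local Open Scope ring_scope.
Local Open Scope classical_set_scope.

(* Laurent polynomials in n variables over R: finitely supported functions
   Z^n -> R, exponents b : 'rV[int]_n, coefficient of X^b is f b. *)
Section Laurent.
Variables (R : realType) (n : nat).
Definition expo := 'rV[int]_n.
Definition lpoly := expo -> R.

Definition finsupp (f : lpoly) : Prop := exists s : seq expo, forall b, f b != 0 -> b \in s.

(* product a * f of Laurent polynomials, computed over a duplicate-free
   sequence s covering the support of a *)
Definition lmul (a f : lpoly) (s : seq expo) : lpoly :=
  fun b => \sum_(c <- s) a c * f (b - c).

Definition vdot (v : 'rV[R]_n) (b : expo) : R := \sum_(i < n) v 0 i * (b 0 i)%:~R.

(* deg_v f = max{ v.b : c_b <> 0 }, and -oo for f = 0 *)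
Definition degv (v : 'rV[R]_n) (f : lpoly) : \bar R :=
  ereal_sup [set (vdot v b)%:E | b in [set b | f b != 0]].

Definition initv (v : 'rV[R]_n) (f : lpoly) : lpoly :=
  fun b => if ((vdot v b)%:E == degv v f) then f b else 0.

Definition Apos (f : lpoly) : Prop := finsupp f /\ (forall b, 0 <= f b) /\ exists b, f b != 0.

Variable K : nat.
Definition lvec := 'I_K -> lpoly.

Definition Asubmodule (M : set lvec) : Prop :=
  [/\ forall F, M F -> forall i, finsupp (F i),
      M (fun _ _ => 0),
      forall F G, M F -> M G -> M (fun i b => F i b + G i b) &
      forall (a : lpoly) (s : seq expo) F, finsupp a -> uniq s ->
        (forall c, a c != 0 -> c \in s) -> M F -> M (fun i => lmul a (F i) s)].

Local Open Scope ereal_scope.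
Definition Mv (v : 'rV[R]_n) (I : {set 'I_K}) (F : lvec) : {set 'I_K} :=
  [set i in I | degv v (F i) == \big[maxe/-oo]_(i' in I) degv v (F i')].

Definition Ov (a : 'I_K -> expo) (v : 'rV[R]_n) : {set 'I_K} :=
  [set i | vdot v (a i) != 0%R].

Definition initv_vec (v : 'rV[R]_n) (F : lvec) : lvec := fun i => initv v (F i).
End Laurent.

From HB Require Import structures.
From mathcomp Require Import all_boot all_order all_algebra.
From mathcomp Require Import all_classical all_reals ereal topology normedtype.
From mathcomp Require Import ring lra.
Import Order.TTheory GRing.Theory Num.Theory numFieldNormedType.Exports.
Set Implicit Arguments. Unset Strict Implicit. Unset Printing Implicit Defensive.
Local Open Scope ring_scope.

(* Proof of Theorem 1.2: local data in every direction glue into a global f.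

   If g = in_v f and w preserves
      the strict v-order on the relevant exponents, then in_w f = in_w g.
   2. Local step.  Directions w coordinatewise close to a positive multiple of
      v preserve the v-order on any finite set of exponents; for such w the
      hypothesis at v gives the conclusion for f_v at w (good_nbhd): positivity
      of in_w f_v = in_w(in_v f_v), and O_v contained in O_w.
   3. Gluing.  For f = sum_v X^(c v) f_v, the w-initial form of f_i is the sum
      of the w-initial forms of the summands of maximal w-degree; if each such
      "dominant" summand is good at w, so is f (good_shiftsum).
   4. Patching.  By compactness finitely many caps of the unit sphere, each
      inside a cone on which f_v is good, cover all directions.  Shifting f_v
      by X^c with c ~ (L / t_v) v for L large forces every dominant summand at
      w to come from a cap containing w, so step 3 applies (patching). *)

Lemma seq_argmax (T : eqType) (R : realDomainType) (g : T -> R) (s : seq T) x0 :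
  x0 \in s -> exists2 x, x \in s & forall y, y \in s -> g y <= g x.
Proof.
elim: s x0 => // x s IH x0 _; case: s IH => [|y s] IH.
  by exists x; rewrite ?inE // => z; rewrite inE => /eqP ->.
have [z zs hz] := IH y (mem_head _ _).
have [hxz|hzx] := lerP (g x) (g z).
  exists z; first by rewrite inE zs orbT.
  by move=> t; rewrite inE => /orP[/eqP ->|/hz].
exists x; first exact: mem_head.
by move=> t; rewrite inE => /orP[/eqP -> //|/hz ht]; exact: le_trans ht (ltW hzx).
Qed.

Section Leading.
Variables (R : realType) (n : nat).
Implicit Types (w : 'rV[R]_n) (f g : lpoly R n) (b c : expo n).

Lemma vdotD w b c : vdot w (b + c) = vdot w b + vdot w c.
Proof. by rewrite /vdot -big_split; apply: eq_bigr => j _; rewrite mxE intrD mulrDr. Qed.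

Lemma vdot0 w : vdot w 0 = 0.
Proof. by rewrite /vdot big1 // => j _; rewrite mxE mulr0. Qed.

Definition is_lead w f b0 := f b0 != 0 /\ forall b, f b != 0 -> vdot w b <= vdot w b0.

Lemma lead_exists w f : finsupp f -> (exists b, f b != 0) -> exists b0, is_lead w f b0.
Proof.
move=> [s hs] [b1 hb1].
have : b1 \in [seq b <- s | f b != 0] by rewrite mem_filter hb1 hs.
move=> /(@seq_argmax _ _ (vdot w)) [b0]; rewrite mem_filter => /andP[fb0 _] hm.
by exists b0; split => // b fb; apply: hm; rewrite mem_filter fb hs.
Qed.

Lemma degv_lead w f b0 : is_lead w f b0 -> degv w f = (vdot w b0)%:E.
Proof.
move=> [fb0 hmax]; apply/le_anti/andP; split.
- by apply: ge_ereal_sup => _ [b /= fb <-]; rewrite lee_fin; exact: hmax.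
- by apply: ereal_sup_ubound; exists b0.
Qed.

Lemma initv_lead w f b0 : is_lead w f b0 ->
  forall b, initv w f b = if vdot w b == vdot w b0 then f b else 0.
Proof. by move=> hl b; rewrite /initv (degv_lead hl) eqe. Qed.

Lemma initv_nz w f b : initv w f b != 0 -> initv w f b = f b.
Proof. by rewrite /initv; case: ifP => // _ /eqP. Qed.

Lemma finsupp_initv w f : finsupp f -> finsupp (initv w f).
Proof. by move=> [s hs]; exists s => b hb; apply: hs; rewrite -(initv_nz hb). Qed.

Lemma Apos_initv_nz w f : Apos (initv w f) -> exists b, f b != 0.
Proof. by move=> [_ [_ [b hb]]]; exists b; rewrite -(initv_nz hb). Qed.

Lemma Apos_initv w f : Apos f -> Apos (initv w f).
Proof.
move=> [fs [fpos fnz]]; have [b0 hl] := lead_exists w fs fnz.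
split; first exact: finsupp_initv.
split; first by move=> b; rewrite (initv_lead hl); case: ifP.
by exists b0; rewrite (initv_lead hl) eqxx; case: hl.
Qed.

Section Restriction.
Variables (w : 'rV[R]_n) (f g : lpoly R n).
Hypothesis gf : forall b, g b != 0 -> g b = f b.
Hypothesis fg : forall b, f b != 0 -> g b = 0 -> exists2 b', g b' != 0 & vdot w b < vdot w b'.

Lemma lead_restrict b0 : is_lead w g b0 -> is_lead w f b0.
Proof.
move=> [gb0 hmax]; split; first by rewrite -(gf gb0).
move=> b fb; have [gb|gb] := eqVneq (g b) 0; last exact: hmax.
by have [b' /hmax h1 h2] := fg fb gb; exact: ltW (lt_le_trans h2 h1).
Qed.

Lemma initv_restrict : finsupp g -> (exists b, g b != 0) -> initv w f = initv w g.
Proof.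
move=> gs gnz; have [b0 lg] := lead_exists w gs gnz.
apply: funext => b; rewrite (initv_lead (lead_restrict lg)) (initv_lead lg).
case: eqP => // hb; have [gb|/gf -> //] := eqVneq (g b) 0.
rewrite gb; apply/eqP/negPn/negP => fb; case: lg => _ hmax.
have [b' /hmax h1 h2] := fg fb gb.
by have := lt_le_trans h2 h1; rewrite hb ltxx.
Qed.

End Restriction.

End Leading.

Lemma in_Mv (R : realType) n K (v : 'rV[R]_n) (I : {set 'I_K}) (F : lvec R n K)
  (g : 'I_K -> R) i :
  (forall i, i \in I -> degv v (F i) = (g i)%:E) ->
  (i \in Mv v I F) = (i \in I) && [forall i' in I, g i' <= g i].
Proof.
move=> hg; rewrite /Mv inE; case iI: (i \in I) => //=.
rewrite (hg i iI) (eq_bigr (fun i' => (g i')%:E)); last by move=> j jI; rewrite hg.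
apply/idP/idP.
- move=> /eqP he; apply/forallP => j; apply/implyP => jI.
  by rewrite -lee_fin he; apply: le_bigmax_cond.
- move=> /forallP hall; rewrite eq_le; apply/andP; split; first exact: le_bigmax_cond.
  apply: bigmax_le; first exact: leNye.
  by move=> j jI; rewrite lee_fin; have := hall j; rewrite jI.
Qed.

Lemma pos_gap (R : realDomainType) (l : seq R) :
  exists2 d : R, 0 < d & forall x, x \in l -> 0 < x -> d <= x.
Proof.
elim: l => [|y l [d d0 hd]]; first by exists 1.
exists (if 0 < y then Num.min d y else d) => [|x]; first by case: ifP; rewrite ?lt_min ?d0.
rewrite inE => /orP[/eqP -> y0|xl x0]; first by rewrite y0 ge_min lexx orbT.
by case: ifP => _; rewrite ?ge_min hd.
Qed.

Lemma le_sum_seq (R : realDomainType) (l : seq R) :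
  (forall x, x \in l -> 0 <= x) -> forall x, x \in l -> x <= \sum_(y <- l) y.
Proof.
move=> hpos x xl; rewrite (big_rem _ xl) /= lerDl big_seq sumr_ge0 // => y yl.
exact: hpos (mem_rem yl).
Qed.

(* l1-norm of an exponent vector; it controls |w.b| linearly in the size of w. *)
Definition nb (R : realType) n (b : expo n) : R := \sum_(j < n) `|(b 0 j)%:~R : R|.

Lemma nb_ge0 (R : realType) n (b : expo n) : 0 <= nb R b.
Proof. by apply: sumr_ge0 => j _. Qed.

Lemma vdot_pert (R : realType) n (w v : 'rV[R]_n) (lam eps : R) (b : expo n) :
  (forall j, `|w 0 j - lam * v 0 j| <= eps) ->
  `|vdot w b - lam * vdot v b| <= eps * nb R b.
Proof.
move=> hj.
have -> : vdot w b - lam * vdot v b = \sum_(j < n) (w 0 j - lam * v 0 j) * (b 0 j)%:~R.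
  by rewrite /vdot mulr_sumr -sumrB; apply: eq_bigr => j _; rewrite mulrBl mulrA.
apply: le_trans (ler_norm_sum _ _ _) _.
by rewrite /nb mulr_sumr; apply: ler_sum => j _; rewrite normrM ler_wpM2r.
Qed.

Lemma lt_approx (R : realFieldType) (x y x' y' lam d : R) :
  0 < lam -> 0 < d -> d <= y - x ->
  `|x' - lam * x| <= lam * (d / 3) -> `|y' - lam * y| <= lam * (d / 3) -> x' < y'.
Proof.
move=> lam0 d0 hxy; rewrite !ler_norml => /andP[h1 h2] /andP[h3 h4].
have : lam * d <= lam * (y - x) by rewrite ler_wpM2l // ltW.
have : 0 < lam * d by rewrite mulr_gt0.
move: h1 h2 h3 h4; rewrite mulrBr; lra.
Qed.

Lemma order_preserving_nbhd (R : realType) n (v : 'rV[R]_n) (S : seq (expo n)) :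
  exists2 eps : R, 0 < eps & forall (lam : R) (w : 'rV[R]_n), 0 < lam ->
    (forall j, `|w 0 j - lam * v 0 j| < lam * eps) ->
    forall b b', b \in S -> b' \in S -> vdot v b < vdot v b' -> vdot w b < vdot w b'.
Proof.
have [d d0 hd] := pos_gap [seq vdot v b' - vdot v b | b <- S, b' <- S].
pose C := 1 + \sum_(x <- map (@nb R n) S) x.
have hC : forall b, b \in S -> nb R b <= C.
  move=> b bS; have : nb R b <= \sum_(x <- map (@nb R n) S) x.
    by apply: le_sum_seq; [move=> _ /mapP[y _ ->]; exact: nb_ge0|exact: map_f].
  rewrite /C; lra.
have C0 : 0 < C.
  have : 0 <= \sum_(x <- map (@nb R n) S) x.
    by rewrite big_seq sumr_ge0 // => _ /mapP[y _ ->]; exact: nb_ge0.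
  rewrite /C; lra.
exists (d / (3 * C)); first by rewrite divr_gt0 // mulr_gt0.
move=> lam w lam0 hw.
have pert : forall b, b \in S -> `|vdot w b - lam * vdot v b| <= lam * (d / 3).
  move=> b bS; apply: le_trans (vdot_pert b (fun j => ltW (hw j))) _.
  have -> : lam * (d / 3) = lam * (d / (3 * C)) * C by field; rewrite gt_eqF.
  by rewrite ler_wpM2l ?hC // mulr_ge0 // ltW // divr_gt0 // mulr_gt0.
move=> b b' bS b'S hlt; apply: (lt_approx lam0 d0 _ (pert b bS) (pert b' b'S)).
by apply: hd; [apply/allpairsP; exists (b, b') | rewrite subr_gt0].
Qed.

Definition good (R : realType) n K (a : 'I_K -> expo n) (I J : {set 'I_K})
  (w : 'rV[R]_n) (F : lvec R n K) : Prop :=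
  (forall i, Apos (initv w (F i))) /\ (Ov a w :|: J) :&: Mv w I F != finset.set0.

Lemma Ov_subset (R : realType) n K (a : 'I_K -> expo n) (v w : 'rV[R]_n)
  (S : seq (expo n)) : 0 \in S -> (forall i, a i \in S) ->
  (forall b b', b \in S -> b' \in S -> vdot v b < vdot v b' -> vdot w b < vdot w b') ->
  Ov a v \subset Ov a w.
Proof.
move=> S0 Sa hord; apply/fintype.subsetP => x; rewrite !inE !neq_lt => /orP[h|h];
  rewrite -(vdot0 w); apply/orP.
  by left; apply: hord _ _ (Sa x) S0 _; rewrite vdot0.
by right; apply: hord _ _ S0 (Sa x) _; rewrite vdot0.
Qed.

Section Local.
Variables (R : realType) (n K : nat) (a : 'I_K -> expo n) (I J : {set 'I_K}).
Variables (v : 'rV[R]_n) (F : lvec R n K).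
Hypothesis hF : forall i, finsupp (F i).
Hypothesis hA : forall i, Apos (initv v (F i)).
Hypothesis hH : forall w : 'rV[R]_n, w != 0 ->
  (Ov a w :|: (Ov a v :|: J)) :&: Mv w (Mv v I F) (initv_vec v F) != finset.set0.

(* If w preserves the strict v-order on a finite set S containing 0, the a_i and
   the supports of the F i, then the hypothesis at v yields the conclusion at w:
   in_w F = in_w (in_v F), and the maximal w-degrees of F sit inside the
   maximal v-degrees. *)
Lemma good_of_order_preserving (w : 'rV[R]_n) (S : seq (expo n)) :
  w != 0 -> 0 \in S -> (forall i, a i \in S) -> (forall i b, F i b != 0 -> b \in S) ->
  (forall b b', b \in S -> b' \in S -> vdot v b < vdot v b' -> vdot w b < vdot w b') ->
  good a I J w F.
Proof.
move=> w0 S0 Sa SF hord.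
have [bv hbv] := choice (fun i => lead_exists v (hF i) (Apos_initv_nz (hA i))).
pose d i := vdot v (bv i).
have in_vE i b : initv v (F i) b = if vdot v b == d i then F i b else 0.
  exact: initv_lead.
have dominated i b : F i b != 0 -> initv v (F i) b = 0 ->
    exists2 b', initv v (F i) b' != 0 & vdot w b < vdot w b'.
  move=> fb; rewrite in_vE; case: eqP => [_ /eqP|hne _]; first by rewrite (negPf fb).
  exists (bv i); first by rewrite in_vE eqxx; case: (hbv i).
  apply: hord; [exact: SF fb | exact: SF (proj1 (hbv i)) |].
  by rewrite lt_neqAle; apply/andP; split; [exact/eqP | case: (hbv i) => _; apply].
have [be hbe] := choice (fun i => lead_exists w (finsupp_initv v (hF i)) (proj2 (proj2 (hA i)))).
have restr i b : initv v (F i) b != 0 -> initv v (F i) b = F i b by exact: initv_nz.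
have leadF i : is_lead w (F i) (be i).
  exact: (@lead_restrict _ _ w (F i) (initv v (F i)) (restr i) (dominated i) _ (hbe i)).
have dbe i : vdot v (be i) = d i.
  by have := proj1 (hbe i); rewrite in_vE; case: (vdot v (be i) =P d i); rewrite ?eqxx.
have beS i : be i \in S := SF _ _ (proj1 (leadF i)).
split=> [i|].
  rewrite (initv_restrict (restr i) (dominated i) (finsupp_initv v (hF i))).
    exact: Apos_initv.
  exact: proj2 (proj2 (hA i)).
have /set0Pn [x] := hH w0; rewrite finset.in_setI => /andP[hO].
rewrite (in_Mv _ (fun i _ => degv_lead (hbe i))) => /andP[xI' /forallP hx].
move: xI'; rewrite (in_Mv _ (fun i _ => degv_lead (hbv i))) => /andP[xI /forallP hdx].
apply/set0Pn; exists x; rewrite finset.in_setI; apply/andP; split.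
  have /fintype.subsetP hOv := Ov_subset S0 Sa hord.
  move: hO; rewrite !finset.in_setU => /orP[->//|/orP[/hOv ->//|->]].
  by rewrite orbT.
rewrite (in_Mv _ (fun i _ => degv_lead (leadF i))) xI /=.
apply/forallP => i'; apply/implyP => i'I.
have := hdx i'; rewrite i'I /= => hle.
have [heq|hne] := eqVneq (d i') (d x).
  have := hx i'; rewrite (in_Mv _ (fun i _ => degv_lead (hbv i))) i'I /= => /implyP; apply.
  apply/forallP => i''; apply/implyP => i''I.
  by have := hdx i''; rewrite i''I /=; move: heq; rewrite /d => ->.
by apply/ltW/hord => //; rewrite !dbe lt_neqAle hne.
Qed.

Lemma good_nbhd : exists2 eps : R, 0 < eps &
  forall (lam : R) (w : 'rV[R]_n), 0 < lam -> w != 0 ->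
    (forall j, `|w 0 j - lam * v 0 j| < lam * eps) -> good a I J w F.
Proof.
have [s hs] := choice (fun i => hF i).
pose S := 0 :: [seq a i | i <- enum 'I_K] ++ flatten [seq s i | i <- enum 'I_K].
have [eps eps0 hord] := order_preserving_nbhd v S.
exists eps => // lam w lam0 w0 hw.
apply: (good_of_order_preserving (S := S) w0) => [||i b fb|]; first exact: mem_head.
- by move=> i; rewrite inE mem_cat map_f ?mem_enum ?orbT.
- rewrite inE mem_cat; apply/orP; right; apply/orP; right.
  by apply/flattenP; exists (s i); [apply: map_f; rewrite mem_enum | exact: hs].
- exact: hord lam0 hw.
Qed.

End Local.

Definition shiftsum (R : realType) n K (G : 'rV[R]_n -> lvec R n K)
  (c : 'rV[R]_n -> expo n) (s : seq 'rV[R]_n) : lvec R n K :=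
  fun i b => \sum_(v <- s) G v i (b - c v).

Definition monomial (R : realType) n (c : expo n) : lpoly R n :=
  fun c0 => if c0 == c then 1 else 0.

Lemma shiftsum_mem (R : realType) n K (M : set (lvec R n K)) (G : 'rV[R]_n -> lvec R n K)
  (c : 'rV[R]_n -> expo n) (s : seq 'rV[R]_n) :
  Asubmodule M -> (forall v, v \in s -> M (G v)) -> M (shiftsum G c s).
Proof.
move=> [_ h0 hadd hmul]; elim: s => [|v s IH] hs.
  suff -> : shiftsum G c [::] = (fun _ _ => 0) by [].
  by apply: funext => i; apply: funext => b; rewrite /shiftsum big_nil.
have Mv : M (fun i => lmul (monomial R (c v)) (G v i) [:: c v]).
  have supp c0 : monomial R (c v) c0 != 0 -> c0 \in [:: c v].
    by rewrite /monomial; case: (c0 =P c v) => [->|_]; rewrite ?mem_head ?eqxx.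
  by apply: hmul (hs v (mem_head _ _)) => //; exists [:: c v].
have := hadd _ _ Mv (IH (fun x xs => hs x (@mem_behead _ (v :: s) _ xs))).
congr M; apply: funext => i; apply: funext => b.
by rewrite /shiftsum big_cons /lmul big_seq1 /monomial eqxx mul1r.
Qed.

Lemma sum_nz (R : realType) (T : eqType) (s : seq T) (F : T -> R) :
  \sum_(x <- s) F x != 0 -> exists2 x, x \in s & F x != 0.
Proof.
move=> h; have [/hasP[x xs nz]|/hasPn hn] := boolP (has (fun x => F x != 0) s).
  by exists x.
by move: h; rewrite big_seq big1 ?eqxx // => x /hn /negPn/eqP.
Qed.

Section Glue.
Variables (R : realType) (n K : nat) (a : 'I_K -> expo n) (I J : {set 'I_K}).
Variables (w : 'rV[R]_n) (s : seq 'rV[R]_n) (G : 'rV[R]_n -> lvec R n K).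
Variable (c : 'rV[R]_n -> expo n).
Let f := shiftsum G c s.

Definition dominant i v b0 := [/\ v \in s, is_lead w (G v i) b0 &
  forall v' b', v' \in s -> G v' i b' != 0 -> vdot w (c v' + b') <= vdot w (c v + b0)].

Hypothesis hG : forall v i, v \in s -> finsupp (G v i) /\ exists b, G v i b != 0.
Hypothesis hdom : forall i v b0, dominant i v b0 -> good a I J w (G v).

Lemma leads_exist : exists bl : 'rV[R]_n -> 'I_K -> expo n,
  forall v i, v \in s -> is_lead w (G v i) (bl v i).
Proof.
have hex v : exists bv : 'I_K -> expo n, forall i, v \in s -> is_lead w (G v i) (bv i).
  suff /choice[bv hbv] : forall i, exists b, v \in s -> is_lead w (G v i) b by exists bv.
  move=> i; have [vs|_] := boolP (v \in s); last by exists 0.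
  by have [fs fnz] := hG i vs; have [b hb] := lead_exists w fs fnz; exists b.
by have [bl hbl] := choice hex; exists bl => v i /(hbl v i).
Qed.

Lemma dominant_exists (bl : 'rV[R]_n -> 'I_K -> expo n) i v0 : v0 \in s ->
  (forall v, v \in s -> is_lead w (G v i) (bl v i)) ->
  exists v, dominant i v (bl v i).
Proof.
move=> v0s hbl; have [v vs hv] := seq_argmax (fun v => vdot w (c v + bl v i)) v0s.
exists v; split => [||v' b' v's nz]; [done|exact: hbl|apply: le_trans (hv v' v's)].
by rewrite !vdotD lerD2l; case: (hbl v' v's) => _; apply.
Qed.

Lemma dominant_shift i v b0 v' b' : dominant i v b0 -> v' \in s -> G v' i b' != 0 ->
  vdot w (c v' + b') = vdot w (c v + b0) -> dominant i v' b'.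
Proof.
move=> [vs _ hmax] v's nz heq; split=> //; last by move=> v'' b'' v''s nz''; rewrite heq hmax.
by split=> // b nzb; have := hmax _ _ v's nzb; rewrite -heq !vdotD lerD2l.
Qed.

Lemma dominant_pos i v b0 : dominant i v b0 -> 0 < G v i b0.
Proof.
move=> hd; have [_ [nz _] _] := hd; have [/(_ i) [_ [pos _]] _] := hdom hd.
have := pos b0; rewrite (initv_lead (let: And3 _ l _ := hd in l)) eqxx => ge0.
by rewrite lt_def nz.
Qed.

Lemma shiftsum_term_ge0 i v b0 beta v' : dominant i v b0 ->
  vdot w beta = vdot w (c v + b0) -> v' \in s -> 0 <= G v' i (beta - c v').
Proof.
move=> hd hb v's; have [->|nz] := eqVneq (G v' i (beta - c v')) 0; first by [].
apply/ltW/dominant_pos/(dominant_shift hd v's nz).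
by rewrite addrC subrK.
Qed.

Lemma lead_shiftsum i v b0 : dominant i v b0 ->
  is_lead w (f i) (c v + b0) /\ 0 < f i (c v + b0).
Proof.
move=> hd; have [vs _ hmax] := hd.
have pos : 0 < f i (c v + b0).
  rewrite /f /shiftsum (big_rem _ vs) /=.
  have -> : c v + b0 - c v = b0 by rewrite addrC addKr.
  apply: ltr_pwDl; first exact: dominant_pos hd.
  by rewrite big_seq sumr_ge0 // => v' /mem_rem; exact: shiftsum_term_ge0 hd erefl.
split=> //; split; first by rewrite gt_eqF.
move=> beta /sum_nz [v' v's nz]; have := hmax _ _ v's nz.
by rewrite addrC subrK.
Qed.

Lemma Apos_shiftsum i v0 : v0 \in s -> finsupp (f i) -> Apos (initv w (f i)).
Proof.
move=> v0s fs; have [bl hbl] := leads_exist.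
have [v hd] := dominant_exists v0s (fun v vs => hbl v i vs).
have [hl pos] := lead_shiftsum hd.
split; first exact: finsupp_initv.
split=> [beta|]; last by exists (c v + bl v i); rewrite (initv_lead hl) eqxx gt_eqF.
rewrite (initv_lead hl); case: eqP => // hb.
by rewrite /f /shiftsum big_seq sumr_ge0 // => v' v's; exact: shiftsum_term_ge0 hd hb v's.
Qed.

Lemma good_shiftsum v0 i0 : v0 \in s -> i0 \in I -> (forall i, finsupp (f i)) ->
  good a I J w f.
Proof.
move=> v0s i0I fs; split=> [i|]; first exact: Apos_shiftsum v0s (fs i).
have [bl hbl] := leads_exist.
have [vi hvi] := choice (fun i => dominant_exists v0s (fun v vs => hbl v i vs)).
pose D i := vdot w (c (vi i) + bl (vi i) i).
have degf i : degv w (f i) = (D i)%:E.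
  by apply: degv_lead; case: (lead_shiftsum (hvi i)).
have i0e : i0 \in enum I by rewrite mem_enum.
have [istar] := seq_argmax D i0e; rewrite mem_enum => istarI hmax.
have [vs _ _] := hvi istar; set v := vi istar in vs hmax *.
have [_ /set0Pn [x]] := hdom (hvi istar).
rewrite finset.in_setI => /andP[hO].
rewrite (in_Mv _ (fun j _ => degv_lead (hbl v j vs))) => /andP[xI /forallP hx].
apply/set0Pn; exists x; rewrite finset.in_setI hO (in_Mv _ (fun j _ => degf j)) xI /=.
apply/forallP => i'; apply/implyP => i'I.
have h1 : D i' <= D istar by apply: hmax; rewrite mem_enum.
have h2 : vdot w (bl v istar) <= vdot w (bl v x) by have := hx istar; rewrite istarI.
have [_ _ hdx] := hvi x; have h3 := hdx v (bl v x) vs (proj1 (hbl v x vs)).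
by move: h1 h2 h3; rewrite /D -/v !vdotD; lra.
Qed.

End Glue.

Section Sphere.
Variables (R : realType) (n : nat).
Implicit Types (u v w : 'rV[R]_n).

Definition dotr u v : R := \sum_(j < n) u 0 j * v 0 j.
Definition sphere := [set u : 'rV[R]_n | dotr u u = 1]%classic.

Lemma continuous_sum (T : topologicalType) (I : Type) (l : seq I) (f : I -> T -> R) :
  (forall i, continuous (f i)) -> continuous (fun x => \sum_(i <- l) f i x).
Proof.
move=> hf; elim: l => [|i l IH]; first by under eq_fun do rewrite big_nil; exact: cst_continuous.
by under eq_fun do rewrite big_cons; move=> x; apply: continuousD; [exact: hf|exact: IH].
Qed.

Lemma dotrZl (k : R) u v : dotr (k *: u) v = k * dotr u v.
Proof. by rewrite /dotr mulr_sumr; apply: eq_bigr => j _; rewrite !mxE mulrA. Qed.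

Lemma sqr_coord_le w l : w 0 l ^+ 2 <= dotr w w.
Proof.
rewrite /dotr (bigD1 l) //= -expr2 lerDl.
by apply: sumr_ge0 => j _; rewrite -expr2 sqr_ge0.
Qed.

Lemma coord_le_norm w (r : R) l : 0 <= r -> r ^+ 2 = dotr w w -> `|w 0 l| <= r.
Proof.
move=> r0 hr; have := sqr_coord_le w l; rewrite -hr => h.
by rewrite -(ler_pXn2r (n:=2)) ?nnegrE ?normr_ge0 // real_normK // num_real.
Qed.

Lemma sphere_compact : compact sphere.
Proof.
have Bc : compact [set v : 'rV[R]_n | forall i, `[(-1 : R), 1]%classic (v ord0 i)].
  by apply: (@rV_compact _ n (fun=> `[(-1 : R), 1]%classic)) => _; apply: segment_compact.
apply: (subclosed_compact _ Bc).
  have -> : sphere = ((fun u => dotr u u) @^-1` [set 1])%classic by [].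
  apply: preimage_closed; last exact: closed_eq.
  move=> x _; apply: continuous_sum => j y.
  by apply: continuousM; exact: coord_continuous.
move=> u hu i; rewrite /= in_itv /= -ler_norml.
by apply: coord_le_norm => //; rewrite expr1n.
Qed.

Lemma sphere_neq0 v : sphere v -> v != 0.
Proof.
rewrite /sphere /= => hv; apply/eqP => v0; move: hv; rewrite v0 /dotr.
by under eq_bigr do rewrite mxE mul0r; rewrite big1 // => /esym/eqP; rewrite oner_eq0.
Qed.

Lemma sphere_cover (th : 'rV[R]_n -> R) : (forall v, sphere v -> th v < 1) ->
  exists2 D : seq 'rV[R]_n, (forall v, v \in D -> sphere v) &
    forall u, sphere u -> exists2 v, v \in D & th v < dotr u v.
Proof.
move=> th1; pose U v := [set u | th v < dotr u v]%classic.
have Uopen v : sphere v -> open (U v).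
  move=> _; apply: (@open_comp _ _ (fun u => dotr u v) [set x | th v < x]%classic).
    by move=> x _; apply: continuous_sum => j y; apply: continuousM;
      [exact: coord_continuous | exact: cst_continuous].
  exact: open_gt.
have Scov : (sphere `<=` cover sphere U)%classic.
  by move=> u hu; exists u => //; rewrite /U /= hu; exact: th1.
have := sphere_compact; rewrite compact_cover => /(_ _ _ _ Uopen Scov) [D hD hcov].
exists (finmap.enum_fset D) => [v vD|u /hcov [v vD hv]]; last by exists v.
by have := hD v vD; rewrite in_setE.
Qed.

Lemma cap_close w v (r t e : R) :
  dotr v v = 1 -> 0 < r -> r ^+ 2 = dotr w w -> 0 < e -> 2 * (1 - t) <= e ^+ 2 ->
  t * r < dotr w v -> forall l, `|w 0 l - r * v 0 l| < r * e.
Proof.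
move=> hv r0 hr e0 hte hwv l.
have hsum : dotr (w - r *: v) (w - r *: v) = dotr w w - 2 * r * dotr w v + r ^+ 2 * dotr v v.
  rewrite /dotr mulr_sumr mulr_sumr -sumrB -big_split /=; apply: eq_bigr => j _.
  by rewrite !mxE; ring.
have := sqr_coord_le (w - r *: v) l; rewrite hsum hv -hr mulr1 !mxE => h1.
have re0 : 0 <= r * e by rewrite mulr_ge0 // ltW.
rewrite -(ltr_pXn2r (n:=2)) ?nnegrE ?normr_ge0 // real_normK ?num_real // exprMn.
have : r * (t * r) < r * dotr w v by rewrite ltr_pM2l.
have : r ^+ 2 * (2 * (1 - t)) <= r ^+ 2 * e ^+ 2 by rewrite ler_wpM2l // sqr_ge0.
by move: h1; nra.
Qed.

Lemma polar_decomposition w : w != 0 ->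
  exists r : R, [/\ 0 < r, r ^+ 2 = dotr w w & sphere (r^-1 *: w)].
Proof.
move=> w0; have [l wl] : exists l, w 0 l != 0.
  apply/existsP; apply: contraNT w0 => /existsPn hl.
  by apply/eqP/rowP => l; rewrite mxE; apply/eqP/negPn/hl.
have dw0 : 0 < dotr w w.
  by apply: lt_le_trans (sqr_coord_le w l); rewrite lt_def sqr_ge0 expf_eq0 /= wl andbT.
exists (Num.sqrt (dotr w w)); rewrite sqrtr_gt0 sqr_sqrtr ?ltW //; split => //.
set r := Num.sqrt _; rewrite /sphere /= dotrZl.
have -> : dotr w (r^-1 *: w) = r^-1 * dotr w w.
  by rewrite /dotr mulr_sumr; apply: eq_bigr => j _; rewrite mxE mulrCA.
rewrite mulrA -expr2 exprVn sqr_sqrtr ?ltW //.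
by rewrite mulVf // gt_eqF.
Qed.

End Sphere.
Arguments sphere : clear implicits.

Section Shifts.
Variables (R : realType) (n : nat).

Definition round_exp (k : R) (v : 'rV[R]_n) : expo n := \row_l Num.floor (k * v 0 l).

Lemma vdot_bound (w : 'rV[R]_n) (r : R) (b : expo n) :
  (forall l, `|w 0 l| <= r) -> `|vdot w b| <= r * nb R b.
Proof.
move=> hw; have := @vdot_pert R n w w 0 r b.
by rewrite mul0r subr0; apply => j; rewrite mul0r subr0.
Qed.

Lemma round_exp_bound (w v : 'rV[R]_n) (r k : R) :
  (forall l, `|w 0 l| <= r) -> `|vdot w (round_exp k v) - k * dotr w v| <= n%:R * r.
Proof.
move=> hw.
have -> : vdot w (round_exp k v) - k * dotr w v =
    \sum_(l < n) w 0 l * ((Num.floor (k * v 0 l))%:~R - k * v 0 l).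
  by rewrite /vdot /dotr mulr_sumr -sumrB; apply: eq_bigr => l _; rewrite mxE; ring.
apply: le_trans (ler_norm_sum _ _ _) _.
have -> : n%:R * r = \sum_(l < n) r by rewrite sumr_const card_ord mulr_natl.
apply: ler_sum => l _.
rewrite normrM -[r]mulr1 ler_pM //.
have h1 := floor_le (k * v 0 l); have := floorD1_gt (k * v 0 l); rewrite intrD.
by rewrite ler_norml; lra.
Qed.

(* If the summand shifted towards v reaches the w-degree of the one shifted
   towards j, and w lies in the s_j-cap of j, then w lies in the t_v-cap of v:
   the shifts (L / t) v outweigh the bounded supports once L is large. *)
Lemma shift_dominance (w v j : 'rV[R]_n) (r L B tv tj sj : R) (b0 b' : expo n) :
  0 < r -> (forall l, `|w 0 l| <= r) -> 0 < tv -> 0 < tj -> 0 < L ->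
  nb R b0 <= B -> nb R b' <= B -> tj * (2 * (n%:R + B) + 1) <= L * (sj - tj) ->
  sj * r < dotr w j ->
  vdot w (round_exp (L / tj) j + b') <= vdot w (round_exp (L / tv) v + b0) ->
  tv * r < dotr w v.
Proof.
move=> r0 hw tv0 tj0 L0 hb0 hb' hL hj; rewrite !vdotD.
have := round_exp_bound v (L / tv) hw; have := round_exp_bound j (L / tj) hw.
have := le_trans (vdot_bound b0 hw) (ler_wpM2l (ltW r0) hb0).
have := le_trans (vdot_bound b' hw) (ler_wpM2l (ltW r0) hb').
rewrite !ler_norml => /andP[e1 _] /andP[_ e2] /andP[e3 _] /andP[_ e4] hdeg.
have gain : 2 * (n%:R + B) + 1 <= L * (sj - tj) / tj by rewrite ler_pdivlMr // mulrC.
have hY : (L + (2 * (n%:R + B) + 1)) * r <= L / tj * (sj * r).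
  have -> : L / tj * (sj * r) = (L + L * (sj - tj) / tj) * r by field; rewrite gt_eqF.
  by apply: ler_wpM2r; [exact: ltW | rewrite lerD2l].
have hj' : L / tj * (sj * r) < L / tj * dotr w j by rewrite ltr_pM2l ?divr_gt0.
rewrite ltNge; apply/negP => hv.
have : L / tv * dotr w v <= L / tv * (tv * r) by rewrite ler_wpM2l // ltW ?divr_gt0.
have -> : L / tv * (tv * r) = L * r by field; rewrite gt_eqF.
move: hY; rewrite mulrDl; lra.
Qed.

End Shifts.

Lemma uniform_bound (R : realDomainType) (T : eqType) (s : seq T) (P : T -> R -> Prop) :
  (forall x, x \in s -> exists B, P x B) ->
  (forall x B B', x \in s -> P x B -> B <= B' -> P x B') ->
  exists2 B, 0 <= B & forall x, x \in s -> P x B.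
Proof.
move=> hex hmono; elim: s hex hmono => [|y s IH] hex hmono; first by exists 0.
have sub x : x \in s -> x \in y :: s by move=> xs; rewrite inE xs orbT.
have [B1 B10 hB1] := IH (fun x xs => hex x (sub x xs)) (fun x B B' xs => hmono x B B' (sub x xs)).
have [B2 hB2] := hex y (mem_head _ _).
exists (Num.max B1 B2) => [|x]; first by rewrite le_max B10.
rewrite inE => /orP[/eqP ->|xs].
  by apply: hmono hB2 _; rewrite ?mem_head // le_max lexx orbT.
by apply: hmono (hB1 x xs) _; rewrite ?sub // le_max lexx.
Qed.

Lemma support_bound (R : realType) n K (F : 'rV[R]_n -> lvec R n K) (D : seq 'rV[R]_n) :
  (forall v i, v \in D -> finsupp (F v i)) ->
  exists B, forall v i b, v \in D -> F v i b != 0 -> nb R b <= B.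
Proof.
move=> hfs; pose P (x : 'rV[R]_n * 'I_K) B := forall b, F x.1 x.2 b != 0 -> nb R b <= B.
have hex x : x \in [seq (v, i) | v <- D, i <- enum 'I_K] -> exists B, P x B.
  case: x => v i /allpairsP[[v' i'] [/= vD _ [-> ->]]].
  have [sq hsq] := hfs v' i' vD.
  exists (\sum_(x <- map (@nb R n) sq) x) => b /hsq bsq.
  by apply: le_sum_seq; [move=> _ /mapP[y _ ->]; exact: nb_ge0 | exact: map_f].
have [B _ hB] := uniform_bound hex (fun x B1 B2 _ h12 le12 b nz => le_trans (h12 b nz) le12).
by exists B => v i b vD; apply: (hB (v, i)); rewrite allpairs_f ?mem_enum.
Qed.

Lemma large_scale (R : realFieldType) (T : eqType) (D : seq T) (t s : T -> R) (k : R) :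
  (forall v, v \in D -> t v < s v) ->
  exists2 L, 0 < L & forall v, v \in D -> t v * k <= L * (s v - t v).
Proof.
move=> hts; have hex v : v \in D -> exists L, t v * k <= L * (s v - t v).
  move=> vD; exists (t v * k / (s v - t v)).
  by rewrite mulrVK // unitfE gt_eqF // subr_gt0 hts.
have mono v L L' : v \in D -> t v * k <= L * (s v - t v) -> L <= L' ->
    t v * k <= L' * (s v - t v).
  by move=> vD h hL; apply: le_trans h _; rewrite ler_wpM2r // subr_ge0 ltW ?hts.
have [L L0 hL] := uniform_bound hex mono.
exists (L + 1) => [|v vD]; first by rewrite ltr_wpDl.
by apply: mono vD (hL v vD) _; rewrite lerDl.
Qed.

(* Radii of the nested caps {u | t < u.v} and {u | s < u.v} around a unit
   vector v whose cone has width e: the outer cap lies within the cone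
   (cap_close), and the inner caps are used to cover the sphere. *)
Definition cap_t (R : realFieldType) (e : R) : R := 1 - Num.min e 1 ^+ 2 / 2.
Definition cap_s (R : realFieldType) (e : R) : R := 1 - Num.min e 1 ^+ 2 / 4.

Lemma cap_radii (R : realFieldType) (e : R) : 0 < e ->
  [/\ 0 < cap_t e, cap_t e < cap_s e, cap_s e < 1 & 2 * (1 - cap_t e) <= e ^+ 2].
Proof.
move=> e0; have m0 : 0 < Num.min e 1 by rewrite lt_min e0 ltr01.
have : Num.min e 1 ^+ 2 <= 1 by rewrite expr_le1 ?(ltW m0) // ge_min lexx orbT.
have : Num.min e 1 ^+ 2 <= e ^+ 2.
  by rewrite ler_pXn2r ?nnegrE ?(ltW m0) ?(ltW e0) // ge_min lexx.
have : 0 < Num.min e 1 ^+ 2 by rewrite exprn_gt0.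
by rewrite /cap_t /cap_s; split; lra.
Qed.

Lemma patching (R : realType) (n K : nat) (M : set (lvec R n K)) (hM : Asubmodule M)
  (a : 'I_K -> expo n) (I J : {set 'I_K}) (F : 'rV[R]_n -> lvec R n K)
  (ep : 'rV[R]_n -> R) :
  (forall v, v != 0 -> [/\ M (F v), 0 < ep v &
     forall (lam : R) (w : 'rV[R]_n), 0 < lam -> w != 0 ->
       (forall j, `|w 0 j - lam * v 0 j| < lam * ep v) -> good a I J w (F v)]) ->
  exists2 f, M f & forall w, w != 0 -> good a I J w f.
Proof.
move=> hdat; have [hfs _ _ _] := hM.
pose t v := cap_t (ep v); pose s v := cap_s (ep v).
have ht v : sphere R n v -> [/\ 0 < t v, t v < s v, s v < 1 & 2 * (1 - t v) <= ep v ^+ 2].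
  by move=> /sphere_neq0 /hdat [_ ep0 _]; exact: cap_radii.
have [D DS hcov] := sphere_cover (fun v hv => let: And4 _ _ h _ := ht v hv in h).
have leadF v i : v \in D -> finsupp (F v i) /\ exists b, F v i b != 0.
  move=> /DS /sphere_neq0 v0; have [Mv ep0 hloc] := hdat v v0; split; first exact: hfs.
  have near_v j : `|v 0 j - 1 * v 0 j| < 1 * ep v by rewrite !mul1r subrr normr0.
  have [/(_ i) hA _] := hloc 1 v ltr01 v0 near_v.
  exact: Apos_initv_nz hA.
have [B hB] := support_bound (fun v i vD => proj1 (leadF v i vD)).
have [L L0 hL] := large_scale (2 * (n%:R + B) + 1)
  (fun v vD => let: And4 _ h _ _ := ht v (DS v vD) in h).
pose c v := round_exp (L / t v) v.
have Mf : M (shiftsum F c D) by apply: shiftsum_mem => // v /DS /sphere_neq0 /hdat[].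
exists (shiftsum F c D) => // w w0.
have [r [r0 hr hu]] := polar_decomposition w0.
have hwl l : `|w 0 l| <= r := coord_le_norm l (ltW r0) hr.
(* w lies in the inner cap of some j in D, hence in its outer cap. *)
have [j jD hj] := hcov _ hu.
have hj' : s j * r < dotr w j.
  by move: hj; rewrite dotrZl -(ltr_pM2l r0) mulrA divff ?gt_eqF // mul1r mulrC.
have cap v : v \in D -> t v * r < dotr w v -> good a I J w (F v).
  move=> vD hv; have [_ ep0 hloc] := hdat v (sphere_neq0 (DS v vD)).
  have [_ _ _ te] := ht v (DS v vD).
  exact: hloc r w r0 w0 (cap_close (DS v vD) r0 hr ep0 te hv).
have [tj0 tsj _ _] := ht j (DS j jD).
have [_ /set0Pn [i0]] : good a I J w (F j).
  by apply: (cap j jD); apply: lt_trans hj'; rewrite ltr_pM2r.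
rewrite finset.in_setI => /andP[_]; rewrite /Mv inE => /andP[i0I _].
apply: (good_shiftsum leadF _ jD i0I (hfs _ Mf)).
(* a dominant summand v beats the summand of j, so w lies in the cap of v *)
move=> i v b0 [vD [nz _] hmax]; apply: (cap v vD).
have [_ [b' nzb']] := leadF j i jD; have [tv0 _ _ _] := ht v (DS v vD).
apply: shift_dominance r0 hwl tv0 tj0 L0 (hB v i b0 vD nz) (hB j i b' jD nzb')
  (hL j jD) hj' (hmax j b' jD nzb').
Qed.

Theorem mainTheorem12 (R : realType) (n K : nat) (M : set (lvec R n K))
  (hM : Asubmodule M) (a : 'I_K -> expo n) (I J : {set 'I_K}) :
  (forall v : 'rV[R]_n, v != 0 ->
     exists2 fv : lvec R n K, M fv &
       (forall i, Apos (initv v (fv i))) /\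
       (let I' := Mv v I fv in
        let J' := Ov a v :|: J in
        forall w : 'rV[R]_n, w != 0 ->
          (Ov a w :|: J') :&: Mv w I' (initv_vec v fv) != finset.set0)) ->
  exists2 f : lvec R n K, M f &
    (forall v : 'rV[R]_n, v != 0 -> forall i, Apos (initv v (f i))) /\
    (forall v : 'rV[R]_n, v != 0 -> (Ov a v :|: J) :&: Mv v I f != finset.set0).
Proof.
move=> H; have [hfs _ _ _] := hM.
have local (v : 'rV[R]_n) : exists p : lvec R n K * R, v != 0 -> [/\ M p.1, 0 < p.2 &
    forall (lam : R) (w : 'rV[R]_n), 0 < lam -> w != 0 ->
      (forall j, `|w 0 j - lam * v 0 j| < lam * p.2) -> good a I J w p.1].
  have [->|v0] := eqVneq v 0; first by exists ((fun _ _ => 0), 1) => /eqP.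
  have [fv Mfv [hA hH]] := H v v0.
  by have [ep ep0 hep] := good_nbhd (hfs _ Mfv) hA hH; exists (fv, ep).
have [p hp] := choice local.
have [f Mf hf] := patching hM (F := fun v => (p v).1) (ep := fun v => (p v).2) hp.
by exists f => //; split => w /hf [].
Qed.
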